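(* Let $X_1,X_2,B_1,B_2$ be topological spaces with continuous maps $f\colon X_1\to X_2$, $r_1\colon X_1\to B_1$, $r_2\colon X_2\to B_2$, $f_0\colon B_1\to B_2$ such that $r_2\circ f=f_0\circ r_1$. Assume $B_1$ and $B_2$ are locally compact Hausdorff and $f_0$ is proper. Then there is a unique continuous map $\tilde f\colon\beta_{B_1}X_1\to\beta_{B_2}X_2$ such that $\tilde f\circ i_1=i_2\circ f$ and $\beta_{B_2}r_2\circ\tilde f=f_0\circ\beta_{B_1}r_1$.
   Context: For a locally compact Hausdorff space $B$ and a space $X$ with continuous $r\colon X\to B$, let $H_X\subseteq\mathrm{C_b}(X)$ be the closed linear span of products $g\cdot(h\circ r)$, $g\in\mathrm{C_b}(X)$, $h\in\mathrm C_0(B)$. The relative Stone--Čech compactification $\beta_BX$ is the spectrum of the commutative C*-algebra $H_X$; $i\colon X\to\beta_BX$ sends $x$ to evaluation at $x$; $\beta_Br\colon\beta_BX\to B$ is the unique continuous map with $\beta_Br\circ i=r$. Here $i_j\colon X_j\to\beta_{B_j}X_j$ denote the canonical maps for $(X_j,r_j)$. *)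

From HB Require Import structures.
From mathcomp Require Import all_boot all_order all_algebra.
From mathcomp Require Import all_classical all_reals all_analysis.
From mathcomp Require Import complex.
Unset Printing Implicit Defensive.
Import Order.TTheory GRing.Theory Num.Theory.
Import numFieldTopology.Exports numFieldNormedType.Exports.
Local Open Scope classical_set_scope.
Local Open Scope ring_scope.

Definition Cpx (R : realType) : numFieldType := (R[i])%C.

Definition Cb (R : realType) (X : topologicalType) : set (X -> Cpx R) :=
  [set g | continuous g /\ exists M : Cpx R, forall x, `|g x| <= M].

Definition C0 (R : realType) (B : topologicalType) : set (B -> Cpx R) :=
  [set h | continuous h /\
     forall e : Cpx R, 0 < e -> exists K : set B, compact K /\
       forall b, ~ K b -> `|h b| < e].

(* H_X: closure (for the sup norm, inside C_b(X)) of the linear span of the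
   products g * (h \o r), g in C_b(X), h in C_0(B).  (Scalars are absorbed
   into g, so finite sums of such products form the linear span.) *)
Definition HX (R : realType) (X B : topologicalType) (r : X -> B)
    : set (X -> Cpx R) :=
  [set u | Cb R X u /\
     forall e : Cpx R, 0 < e ->
       exists s : seq ((X -> Cpx R) * (B -> Cpx R)),
         (forall p, p \in s -> Cb R X p.1 /\ C0 R B p.2) /\
         forall x, `|u x - \sum_(p <- s) p.1 x * p.2 (r x)| <= e].
Arguments HX R {X B} r _.

(* Ambient space of functionals on functions X -> C, with the pointwise
   (product) topology; restricted to the spectrum below this is the
   weak-* topology. *)
Definition Funct (R : realType) (X : topologicalType) : topologicalType :=
  {ptws (X -> Cpx R) -> Cpx R}.

(* beta_B X = spectrum of H_X: the nonzero multiplicative linear functionals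
   (characters) on H_X.  A character is represented by a functional on all
   of X -> C that vanishes outside H_X (a normalization, so that characters
   are determined by their values on H_X). *)
Definition Spec (R : realType) (X B : topologicalType) (r : X -> B)
    : set (Funct R X) :=
  [set phi | (forall (a : Cpx R) u v, HX R r u -> HX R r v ->
                 phi (fun x => a * u x + v x) = a * phi u + phi v) /\
             (forall u v, HX R r u -> HX R r v ->
                 phi (fun x => u x * v x) = phi u * phi v) /\
             (exists u, HX R r u /\ phi u != 0) /\
             (forall u, ~ HX R r u -> phi u = 0)].
Arguments Spec R {X B} r _.

Definition beta_i (R : realType) (X B : topologicalType) (r : X -> B) (x : X)
    : Funct R X :=
  fun u => if `[< HX R r u >] then u x else 0.
Arguments beta_i R {X B} r x _.

Definition is_beta_r (R : realType) (X B : topologicalType) (r : X -> B)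
    (g : Funct R X -> B) : Prop :=
  {within Spec R r, continuous g} /\ forall x, g (beta_i R r x) = r x.
Arguments is_beta_r R {X B} r g.

Definition proper_map (B1 B2 : topologicalType) (f0 : B1 -> B2) : Prop :=
  forall K : set B2, compact K -> compact (f0 @^-1` K).
Arguments proper_map {B1 B2} f0.

(* Pulling back along f is a *-homomorphism u |-> u \o f from H_X2 to H_X1
   (properness of f0 keeps h \o f0 in C_0(B1) for h in C_0(B2)); its transpose
   [beta_map] sends characters to functionals on H_X2 and is weak-* continuous.
   The key fact is that every character phi of H_X is a limit of point
   evaluations: otherwise finitely many u_i in H_X stay uniformly away from the
   values phi(u_i) at every point, and with phi(v) = 1 the function
   G = |v^2 - v|^2 + sum_i |u_i - phi(u_i) v|^2 lies in H_X, dominates c |v|^2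
   and satisfies phi(G) = 0, whence phi(v)^4 = phi(v^3/G * v) phi(G) = 0.
   Hence two maps on beta_B X that are continuous and agree on the points of X
   are equal.  This yields uniqueness, the identity
   beta r2 \o beta_map = f0 \o beta r1, and the non-vanishing of beta_map phi
   on h \o r2 for a bump h in C_0(B2) with h (f0 (beta r1 phi)) <> 0. *)
From HB Require Import structures.
From mathcomp Require Import all_boot all_order all_algebra.
From mathcomp Require Import all_classical all_reals all_analysis.
From mathcomp Require Import complex ring.
Import Order.TTheory GRing.Theory Num.Theory.
Import numFieldTopology.Exports numFieldNormedType.Exports.
Local Open Scope classical_set_scope.
Local Open Scope ring_scope.

Section NormEstimates.
Context {F : numFieldType}.
Implicit Types a c d e g p y A : F.

Lemma eq0_dominated c a : 0 < c -> c * `|a| ^+ 2 <= 0 -> a = 0.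
Proof.
move=> c_gt0; rewrite pmulr_rle0 // => a2_le0.
by apply/eqP; rewrite -normr_eq0 -(sqrf_eq0 _) eq_le a2_le0 exprn_ge0.
Qed.

Lemma norm_cube_div_le c a g : 0 < c -> c * `|a| ^+ 2 <= g ->
  c * `|a ^+ 3 / g| <= `|a|.
Proof.
move=> c_gt0 ag; have [->|g_neq0] := eqVneq g 0.
  by rewrite invr0 mulr0 normr0 mulr0.
have g_gt0 : 0 < g.
  rewrite lt_def g_neq0 /=; apply: le_trans ag.
  by apply: mulr_ge0; [exact: ltW | exact: exprn_ge0].
rewrite normrM normfV normrX (gtr0_norm g_gt0) mulrA ler_pdivrMr //.
by rewrite exprS mulrCA; apply: ler_wpM2l.
Qed.

(* The pointwise estimate behind [character_defect_dominates], with [a], [y]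
   and [p] standing for [v x], [u x] and [phi u]. *)
Lemma dominated_dichotomy {e d A} a {y p} :
  0 < d -> d <= 1 -> (2 + A) * d <= e -> `|p| <= A -> e <= `|y - p| ->
  d * `|a| <= `|(a - 1) * a| \/ d * `|a| <= `|y - p * a|.
Proof.
move=> d_gt0 d_le1 dAe pA eyp.
have [da1|a1d] := real_leP (gtr0_real d_gt0) (normr_real (a - 1)).
  by left; rewrite normrM; apply: ler_wpM2r.
right; have a_le2 : `|a| <= 2.
  rewrite -(subrK 1 a) (le_trans (ler_normD _ _)) // normr1 -[2]/(1 + 1).
  by rewrite lerD2r (le_trans (ltW a1d)).
have pa1 : `|p * (a - 1)| <= A * d.
  by rewrite normrM; apply: ler_pM => //; exact: ltW.
apply: (@le_trans _ _ (2 * d)).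
  by rewrite mulrC; apply: ler_wpM2r => //; exact: ltW.
apply: (@le_trans _ _ (`|y - p| - `|p * (a - 1)|)); last first.
  by rewrite (_ : y - p * a = (y - p) - p * (a - 1)) ?lerB_dist //; ring.
rewrite lerBrDr; apply: le_trans eyp; apply: le_trans dAe.
by rewrite [X in _ <= X]mulrDl lerD2l.
Qed.

End NormEstimates.

Lemma ler_sum_mem {F : numDomainType} {I : eqType} {s : seq I} (G : I -> F) {i} :
  i \in s -> (forall j, 0 <= G j) -> G i <= \sum_(j <- s) G j.
Proof. by move=> si G_ge0; rewrite (big_rem i) //= lerDl sumr_ge0. Qed.

Section ComplexContinuity.
Context {R : realType}.
Local Notation C := (Cpx R).

Lemma conjc_continuous : continuous (fun z : C => z^*%C : C).
Proof.
move=> z; apply/(@cvgrPdist_lt _ _ _ _ (nbhs_filter z)) => e e0.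
apply: filterS ((@cvgrPdist_lt _ C _ _ (nbhs_filter z) id z).1 cvg_id e e0).
by move=> y /=; rewrite -rmorphB normcJ.
Qed.

Lemma pos_complexE (e : C) : 0 < e -> 0 < complex.Re e /\ e = (complex.Re e)%:C%C.
Proof. by case: e => a b; rewrite ltcE /= => /andP [/eqP -> a0]. Qed.

Lemma normc_real (x : R) : `|x%:C%C : C| = `|x|%:C%C.
Proof. by rewrite normc_def /= expr0n addr0 sqrtr_sqr. Qed.

Lemma real_complex_continuous : continuous (fun x : R => x%:C%C : C).
Proof.
move=> x; apply/(@cvgrPdist_lt _ _ _ _ (nbhs_filter x)) => e /pos_complexE[e0 ->].
apply: filterS ((@cvgrPdist_lt _ _ _ _ (nbhs_filter x) id x).1 cvg_id _ e0).
by move=> y /= xy; rewrite -rmorphB normc_real ltcR.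
Qed.

End ComplexContinuity.

Section BoundedAndVanishing.
Context {R : realType}.
Local Notation C := (Cpx R).

Lemma Cb_cst {X : topologicalType} (a : C) : Cb R X (fun _ => a).
Proof. by split; [exact: cst_continuous | exists `|a|]. Qed.

Lemma Cb_mul {X : topologicalType} {g h : X -> C} :
  Cb R X g -> Cb R X h -> Cb R X (fun x => g x * h x).
Proof.
move=> [cg [M gM]] [ch [N hN]]; split.
  by move=> x; apply: cvgM; [exact: cg | exact: ch].
by exists (M * N) => x; rewrite normrM; apply: ler_pM.
Qed.

Lemma Cb_add {X : topologicalType} {g h : X -> C} :
  Cb R X g -> Cb R X h -> Cb R X (fun x => g x + h x).
Proof.
move=> [cg [M gM]] [ch [N hN]]; split.
  by move=> x; apply: cvgD; [exact: cg | exact: ch].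
by exists (M + N) => x; rewrite (le_trans (ler_normD _ _)) ?lerD.
Qed.

Lemma Cb_conj {X : topologicalType} {g : X -> C} :
  Cb R X g -> Cb R X (fun x => (g x)^*%C).
Proof.
move=> [cg [M gM]]; split; last by exists M => x; rewrite normcJ.
by move=> x; apply: continuous_comp (cg x) (conjc_continuous _).
Qed.

Lemma Cb_comp {X Y : topologicalType} {g : X -> C} {f : Y -> X} :
  continuous f -> Cb R X g -> Cb R Y (g \o f).
Proof.
move=> cf [cg [M gM]]; split; last by exists M => y; exact: gM.
by move=> y; apply: continuous_comp (cf y) (cg _).
Qed.

Lemma C0_conj {B : topologicalType} {h : B -> C} :
  C0 R B h -> C0 R B (fun b => (h b)^*%C).
Proof.
move=> [ch hK]; split.
  by move=> b; apply: continuous_comp (ch b) (conjc_continuous _).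
move=> e /hK[K [cK hKe]]; exists K; split=> // b Kb.
by rewrite normcJ; exact: hKe.
Qed.

Lemma C0_comp {B1 B2 : topologicalType} {h : B2 -> C} {f0 : B1 -> B2} :
  continuous f0 -> proper_map f0 -> C0 R B2 h -> C0 R B1 (h \o f0).
Proof.
move=> cf0 pf0 [ch hK]; split.
  by move=> b; apply: continuous_comp (cf0 b) (ch _).
by move=> e /hK[K [/pf0 cK hKe]]; exists (f0 @^-1` K); split=> // b /hKe.
Qed.

Lemma C0_bump {B : topologicalType} : locally_compact [set: B] ->
  hausdorff_space B -> forall c : B,
  exists h : B -> C, [/\ C0 R B h, h c != 0 & forall b, `|h b| <= 1].
Proof.
move=> lcB hsB c; pose Bi := one_point_compactification B.
have hsBi : hausdorff_space Bi := one_point_compactification_hausdorff lcB hsB.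
have clinf : closed [set (None : Bi)].
  exact/accessible_closed_set1/hausdorff_accessible.
have sep : uniform_separator [set (Some c : Bi)] [set None].
  exact: one_point_compactification_completely_reg.
pose U := @Urysohn Bi R [set Some c] [set None].
have Uc : U (Some c) = 0 by apply: (Urysohn_sub0 sep); exists (Some c).
have Uinf : U None = 1 by apply: (Urysohn_sub1 sep); exists None.
have U01 p : 0 <= U p <= 1.
  have : U p \in `[0, 1]%R.
    exact: (@Urysohn_range Bi R _ _ (U p) (ex_intro2 _ _ p I erefl)).
  by rewrite in_itv.
have cU : continuous U := @Urysohn_continuous Bi R _ _.
exists (fun b => (1 - U (Some b))%:C%C); split.
- split.
    move=> b; apply: continuous_comp; last exact: real_complex_continuous.
    apply: cvgB; first exact: cvg_cst.
    exact: continuous_comp (one_point_compactification_some_continuous _) (cU _).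
  move=> e /pos_complexE[e0 ->].
  have [K [cK clK] KU] :=
    (@cvgrPdist_lt _ _ _ _ (nbhs_filter (None : Bi)) U _).1 (cU None) _ e0.
  exists K; split=> // b Kb.
  have := KU (Some b) (or_introl (ex_intro2 _ _ b Kb erefl)).
  by rewrite /= Uinf normc_real ltcR.
- by rewrite Uc subr0 oner_eq0.
- move=> b; rewrite normc_real -(rmorph1 (@real_complex R)) lecR.
  by have /andP[U0 U1] := U01 (Some b); rewrite ger0_norm ?subr_ge0 // gerBl.
Qed.

End BoundedAndVanishing.

Lemma Cb_cube_div {R : realType} {X : topologicalType} {v G : X -> Cpx R}
    {c : Cpx R} :
  0 < c -> Cb R X v -> continuous G -> (forall x, c * `|v x| ^+ 2 <= G x) ->
  Cb R X (fun x => v x ^+ 3 / G x).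
Proof.
move=> c_gt0 [cv [M vM]] cG vG; split; last first.
  exists (M / c) => x; rewrite ler_pdivlMr // [_ * c]mulrC.
  by apply: le_trans (vM x); exact: norm_cube_div_le.
move=> x; have [Gx0|Gx_neq0] := eqVneq (G x) 0; last first.
  apply: cvgM; last by apply: cvgV => //; exact: cG.
  rewrite exprS expr2; under eq_fun do rewrite exprS expr2.
  by apply: cvgM; [exact: cv | apply: cvgM; exact: cv].
have vx0 : v x = 0 by apply: (eq0_dominated _ _ c_gt0); rewrite -Gx0.
rewrite /continuous_at Gx0 vx0 expr0n mul0r.
apply/(@cvgrPdist_lt _ _ _ _ (nbhs_filter x)) => e e_gt0.
have := (@cvgrPdist_lt _ _ _ _ (nbhs_filter x) v (v x)).1 (cv x) _
  (mulr_gt0 c_gt0 e_gt0).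
apply: filterS => y; rewrite vx0 !sub0r !normrN => vy_small.
by rewrite -(ltr_pM2l c_gt0) (le_lt_trans _ vy_small) // norm_cube_div_le.
Qed.

Section HXClosure.
Context {R : realType} {X B : topologicalType} {r : X -> B}.
Local Notation C := (Cpx R).
Local Notation HX := (HX R r).

Lemma HX_Cb {u} : HX u -> Cb R X u.
Proof. by case. Qed.

Lemma HX0 : HX (fun _ => 0).
Proof.
split; first exact: Cb_cst.
by move=> e e0; exists [::]; split=> // x; rewrite big_nil subr0 normr0 ltW.
Qed.

Lemma HX_ideal {g u} : Cb R X g -> HX u -> HX (fun x => g x * u x).
Proof.
move=> Cg [Cu Hu]; split; first exact: Cb_mul.
have [_ [M gM]] := Cg; pose M1 := `|M| + 1.
have M1_gt0 : 0 < M1 by rewrite ltr_wpDl.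
have gM1 x : `|g x| <= M1.
  have M_ge0 : 0 <= M := le_trans (normr_ge0 _) (gM x).
  by apply: le_trans (gM x) _; rewrite /M1 ger0_norm // lerDl.
move=> e e0; have [s [Cs su]] := Hu (e / M1) (divr_gt0 e0 M1_gt0).
exists [seq ((fun x => g x * p.1 x), p.2) | p <- s]; split.
  move=> _ /mapP[p ps ->]; have [Cp1 Cp2] := Cs p ps.
  by split=> //; exact: Cb_mul.
move=> x; rewrite big_map.
under eq_bigr do rewrite -mulrA; rewrite -mulr_sumr -mulrBr normrM.
by rewrite -(divfK (lt0r_neq0 M1_gt0) e) mulrC; apply: ler_pM.
Qed.

Lemma HXD {u v} : HX u -> HX v -> HX (fun x => u x + v x).
Proof.
move=> [Cu Hu] [Cv Hv]; split; first exact: Cb_add.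
move=> e e0; have e2_gt0 : 0 < e / 2 by rewrite divr_gt0.
have [s1 [Cs1 us1]] := Hu _ e2_gt0; have [s2 [Cs2 vs2]] := Hv _ e2_gt0.
exists (s1 ++ s2); split; first by move=> p; rewrite mem_cat => /orP[/Cs1|/Cs2].
move=> x; rewrite big_cat opprD addrACA (le_trans (ler_normD _ _)) //.
by rewrite [e]splitr lerD.
Qed.

Lemma HX_conj {u} : HX u -> HX (fun x => (u x)^*%C).
Proof.
move=> [Cu Hu]; split; first exact: Cb_conj.
move=> e /Hu[s [Cs us]].
exists [seq ((fun x => (p.1 x)^*%C), (fun b => (p.2 b)^*%C)) | p <- s]; split.
  move=> _ /mapP[p ps ->]; have [Cp1 Cp2] := Cs p ps.
  by split; [exact: Cb_conj | exact: C0_conj].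
move=> x; rewrite big_map.
under eq_bigr do rewrite -rmorphM; rewrite -rmorph_sum -rmorphB normcJ.
exact: us.
Qed.

Lemma HXZ a {u} : HX u -> HX (fun x => a * u x).
Proof. exact/HX_ideal/Cb_cst. Qed.

Lemma HXM {u v} : HX u -> HX v -> HX (fun x => u x * v x).
Proof. by move=> /HX_Cb; exact: HX_ideal. Qed.

Lemma HX_lin a {u v} : HX u -> HX v -> HX (fun x => a * u x + v x).
Proof. by move=> /(HXZ a); exact: HXD. Qed.

Lemma HX_normsq {u} : HX u -> HX (fun x => `|u x| ^+ 2).
Proof.
move=> Hu; have -> : (fun x => `|u x| ^+ 2) = (fun x => u x * ((u x)^*%C : C)).
  by apply/funext => x; rewrite sqr_normc.
by apply: HXM => //; exact: HX_conj.
Qed.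

Lemma HX_sum (I : eqType) (s : seq I) (F : I -> X -> C) :
  (forall i, i \in s -> HX (F i)) -> HX (fun x => \sum_(i <- s) F i x).
Proof.
elim: s => [_|i s IHs Fs].
  have -> : (fun x => \sum_(i <- [::]) F i x) = (fun=> 0).
    by apply/funext => x; rewrite big_nil.
  exact: HX0.
have -> : (fun x => \sum_(j <- i :: s) F j x) =
    (fun x => F i x + \sum_(j <- s) F j x).
  by apply/funext => x; rewrite big_cons.
apply: HXD; first exact/Fs/mem_head.
by apply: IHs => j js; apply: Fs; rewrite inE js orbT.
Qed.

Lemma HX_C0 {h M} : continuous r -> C0 R B h -> (forall b, `|h b| <= M) ->
  HX (fun x => h (r x)).
Proof.
move=> cr C0h hM; have [ch _] := C0h; split.
  by split; [move=> x; exact: continuous_comp (cr x) (ch _) | exists M].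
move=> e e0; exists [:: (fun _ => 1, h)]; split.
  by move=> p; rewrite inE => /eqP -> /=; split; [exact: Cb_cst | exact: C0h].
by move=> x; rewrite big_seq1 /= mul1r subrr normr0 ltW.
Qed.

End HXClosure.

Lemma HX_comp {R : realType} {X1 X2 B1 B2 : topologicalType}
    {f : X1 -> X2} {r1 : X1 -> B1} {r2 : X2 -> B2} {f0 : B1 -> B2} :
  continuous f -> continuous f0 -> proper_map f0 -> r2 \o f = f0 \o r1 ->
  forall u, HX R r2 u -> HX R r1 (u \o f).
Proof.
move=> cf cf0 pf0 comm u [Cu Hu]; split; first exact: Cb_comp.
move=> e /Hu[s [Cs us]]; exists [seq (p.1 \o f, p.2 \o f0) | p <- s]; split.
  move=> _ /mapP[p ps ->]; have [Cp1 Cp2] := Cs p ps.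
  by split; [exact: Cb_comp | exact: C0_comp].
move=> x; rewrite big_map /=; have /= <- := congr1 (fun g => g x) comm.
exact: us.
Qed.

Section Characters.
Context {R : realType} {X B : topologicalType} {r : X -> B} {phi : Funct R X}.
Hypothesis phi_char : Spec R r phi.
Local Notation C := (Cpx R).
Local Notation HX := (HX R r).

Lemma character_lin a {u v} :
  HX u -> HX v -> phi (fun x => a * u x + v x) = a * phi u + phi v.
Proof. by case: phi_char => + _; apply. Qed.

Lemma characterM {u v} :
  HX u -> HX v -> phi (fun x => u x * v x) = phi u * phi v.
Proof. by case: phi_char => _ [+ _]; apply. Qed.

Lemma character_out {u} : ~ HX u -> phi u = 0.
Proof. by case: phi_char => _ [_ [_]]; apply. Qed.

Lemma character0 : phi (fun _ => 0) = 0.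
Proof.
have := character_lin 1 HX0 HX0.
have -> : (fun x : X => 1 * 0 + 0) = (fun _ => 0 : C).
  by apply/funext => x; rewrite mulr0 addr0.
by move/(congr1 (fun z => z - phi (fun _ => 0))); rewrite mul1r addrK subrr.
Qed.

Lemma characterZ a {u} : HX u -> phi (fun x => a * u x) = a * phi u.
Proof.
move=> Hu; have := character_lin a Hu HX0.
have -> : (fun x => a * u x + 0) = (fun x => a * u x).
  by apply/funext => x; rewrite addr0.
by rewrite character0 addr0.
Qed.

Lemma characterD {u v} :
  HX u -> HX v -> phi (fun x => u x + v x) = phi u + phi v.
Proof.
move=> Hu Hv; have := character_lin 1 Hu Hv.
have -> : (fun x => 1 * u x + v x) = (fun x => u x + v x).
  by apply/funext => x; rewrite mul1r.
by rewrite mul1r.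
Qed.

Lemma character_sum (I : eqType) (s : seq I) (F : I -> X -> C) :
  (forall i, i \in s -> HX (F i)) ->
  phi (fun x => \sum_(i <- s) F i x) = \sum_(i <- s) phi (F i).
Proof.
elim: s => [_|i s IHs Fs].
  have -> : (fun x => \sum_(i <- [::]) F i x) = (fun=> 0).
    by apply/funext => x; rewrite big_nil.
  by rewrite character0 big_nil.
have Fs' j : j \in s -> HX (F j) by move=> js; apply: Fs; rewrite inE js orbT.
have -> : (fun x => \sum_(j <- i :: s) F j x) =
    (fun x => F i x + \sum_(j <- s) F j x).
  by apply/funext => x; rewrite big_cons.
by rewrite characterD ?big_cons ?IHs //; [exact/Fs/mem_head | exact: HX_sum].
Qed.

Lemma character_normsq_eq0 {u} :
  HX u -> phi u = 0 -> phi (fun x => `|u x| ^+ 2) = 0.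
Proof.
move=> Hu phiu0.
have -> : (fun x => `|u x| ^+ 2) = (fun x => u x * ((u x)^*%C : C)).
  by apply/funext => x; rewrite sqr_normc.
by rewrite characterM ?phiu0 ?mul0r //; exact: HX_conj.
Qed.

Lemma character_one : exists2 v, HX v & phi v = 1.
Proof.
case: phi_char => _ [_ [[v [Hv phiv]] _]].
exists (fun x => (phi v)^-1 * v x); first exact: HXZ.
by rewrite characterZ // mulVf.
Qed.

End Characters.

Section Density.
Context {R : realType} {X B : topologicalType} {r : X -> B} {phi : Funct R X}.
Hypothesis phi_char : Spec R r phi.
Local Notation C := (Cpx R).
Local Notation HX := (HX R r).

Lemma dominated_character_eq0 {G v} {c : C} :
  HX G -> HX v -> phi G = 0 -> 0 < c -> (forall x, c * `|v x| ^+ 2 <= G x) ->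
  phi v = 0.
Proof.
move=> HG Hv phiG c_gt0 vG.
have [cG _] := HX_Cb HG.
have HKv := HX_ideal (Cb_cube_div c_gt0 (HX_Cb Hv) cG vG) Hv.
have v4E : (fun x => v x ^+ 3 / G x * v x * G x) =
    (fun x => v x * v x * (v x * v x)).
  apply/funext => x; have [Gx0|Gx_neq0] := eqVneq (G x) 0.
    have vx0 : v x = 0 by apply: (eq0_dominated _ _ c_gt0); rewrite -Gx0.
    by rewrite vx0 !(mul0r, mulr0).
  by field.
have Hvv : HX (fun x => v x * v x) by exact: HXM.
have := characterM phi_char HKv HG; rewrite phiG mulr0 v4E.
by rewrite !(characterM phi_char) // => /eqP; rewrite !mulf_eq0 !orbb => /eqP.
Qed.

Section Defect.
Variables (v : X -> C) (s : seq (X -> C)).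

Definition character_defect x : C :=
  `|(v x - 1) * v x| ^+ 2 + \sum_(u <- s) `|u x - phi u * v x| ^+ 2.

Hypotheses (Hv : HX v) (Hs : forall u, u \in s -> HX u).

Let quadE : (fun x => (v x - 1) * v x) = (fun x => -1 * v x + v x * v x).
Proof. by apply/funext => x; ring. Qed.

Let deviationE u : (fun x => u x - phi u * v x) = (fun x => - phi u * v x + u x).
Proof. by apply/funext => x; ring. Qed.

Lemma HX_character_defect : HX character_defect.
Proof.
apply: HXD.
  by apply: HX_normsq; rewrite quadE; apply: HX_lin => //; exact: HXM.
apply: HX_sum => u su.
by apply: HX_normsq; rewrite deviationE; apply: HX_lin => //; exact: Hs.
Qed.

Lemma character_defect_eq0 : phi v = 1 -> phi character_defect = 0.
Proof.
move=> phi_v; have Hq : HX (fun x => (v x - 1) * v x).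
  by rewrite quadE; apply: HX_lin => //; exact: HXM.
have Hw u : u \in s -> HX (fun x => u x - phi u * v x).
  by move=> su; rewrite deviationE; apply: HX_lin => //; exact: Hs.
rewrite (characterD phi_char (HX_normsq Hq)); last first.
  by apply: HX_sum => u su; exact/HX_normsq/Hw.
rewrite (character_sum phi_char); last by move=> u su; exact/HX_normsq/Hw.
rewrite big1_seq ?addr0 => [|u /andP[_ su]]; apply: (character_normsq_eq0 phi_char).
- exact: Hq.
- rewrite quadE (character_lin phi_char) ?(characterM phi_char) ?phi_v //.
    by ring.
  exact: HXM.
- exact: Hw.
- by rewrite deviationE (character_lin phi_char) ?phi_v ?mulr1 ?addNr //; exact: Hs.
Qed.

Lemma character_defect_dominates (e : C) : 0 < e ->
  (forall x, exists2 u, u \in s & e <= `|u x - phi u|) ->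
  exists2 d, 0 < d & forall x, d ^+ 2 * `|v x| ^+ 2 <= character_defect x.
Proof.
move=> e_gt0 far; pose A := \sum_(u <- s) `|phi u|.
have A_ge0 : 0 <= A by rewrite sumr_ge0.
have S_gt0 : 0 < 2 + A + e by rewrite ltr_wpDl // addr_ge0.
pose d := e / (2 + A + e); have d_gt0 : 0 < d by rewrite divr_gt0.
have d_le1 : d <= 1 by rewrite ler_pdivrMr // mul1r lerDr addr_ge0.
have dAe : (2 + A) * d <= e.
  by rewrite mulrA ler_pdivrMr // mulrC ler_pM2l // lerDl ltW.
exists d => // x; have [u su eu] := far x.
have sq_le (z : C) : d * `|v x| <= `|z| -> d ^+ 2 * `|v x| ^+ 2 <= `|z| ^+ 2.
  move=> dvz; rewrite -exprMn !expr2.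
  by apply: ler_pM => //; apply: mulr_ge0 => //; exact: ltW.
have [dq|dw] := dominated_dichotomy (v x) d_gt0 d_le1 dAe
  (ler_sum_mem (fun u => `|phi u|) su (fun _ => normr_ge0 _)) eu.
  apply: le_trans (sq_le _ dq) _.
  by rewrite lerDl sumr_ge0 // => w _; exact: exprn_ge0.
apply: le_trans (sq_le _ dw) _.
apply: le_trans (ler_sum_mem (fun w => `|w x - phi w * v x| ^+ 2) su _) _.
  by move=> w; exact: exprn_ge0.
by rewrite lerDr exprn_ge0.
Qed.

End Defect.

Lemma character_approx {s : seq (X -> C)} {e : C} :
  (forall u, u \in s -> HX u) -> 0 < e ->
  exists x, forall u, u \in s -> `|u x - phi u| < e.
Proof.
move=> Hs e_gt0; have [v Hv phi_v] := character_one phi_char.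
apply: contrapT => no_x.
have far x : exists2 u, u \in s & e <= `|u x - phi u|.
  apply: contrapT => not_far; apply: no_x; exists x => u su.
  have [//|eu] := real_ltP (normr_real (u x - phi u)) (gtr0_real e_gt0).
  by case: not_far; exists u.
have [d d_gt0 dG] := character_defect_dominates v s e e_gt0 far.
have := dominated_character_eq0 (HX_character_defect v s Hv Hs) Hv
  (character_defect_eq0 v s Hv Hs phi_v) (exprn_gt0 2 d_gt0) dG.
by rewrite phi_v => /eqP; rewrite oner_eq0.
Qed.

End Density.

Lemma cvg_within_preimage {T : Type} {U : topologicalType} (F : set_system T)
    (f : T -> U) (D : set U) (y : U) :
  Filter F -> f @ F --> y -> F (f @^-1` D) -> f @ F --> within D (nbhs y).
Proof.
move=> FF fy FD W /fy FW; apply: filterS2 FD FW => x Dfx; exact.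
Qed.

Lemma subspace_continuous_comp {U V W : topologicalType} (A : set U) (D : set V)
    (f : U -> V) (g : V -> W) :
  {within A, continuous f} -> (forall x, A x -> D (f x)) ->
  {within D, continuous g} -> {within A, continuous (g \o f)}.
Proof.
move=> /subspace_continuousP cf fAD /subspace_continuousP cg.
apply/subspace_continuousP => x Ax; apply: cvg_comp (cg _ (fAD _ Ax)).
by apply: cvg_within_preimage (cf _ Ax) _; apply: filterS fAD (withinT _ _).
Qed.

Section PointwiseTopology.
Context {R : realType} {X : topologicalType}.
(* [pointwise_cvgP] wants some topology on the index type [X -> C]; any will do,
   since it does not enter the statement. *)
Import ArrowAsProduct.

Lemma Funct_cvgP (F : set_system (Funct R X)) (p : Funct R X) : Filter F ->
  F --> p <-> forall t, (fun g : Funct R X => g t) @ F --> p t.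
Proof. exact: pointwise_cvgP. Qed.

Lemma Funct_hausdorff : hausdorff_space (Funct R X).
Proof. exact: hausdorff_product (fun _ => @norm_hausdorff _ _). Qed.

End PointwiseTopology.

Section EvaluationFilter.
Context {R : realType} {X B : topologicalType} {r : X -> B}.
Local Notation C := (Cpx R).
Local Notation HX := (HX R r).

Lemma beta_i_Spec {v x} : HX v -> v x != 0 -> Spec R r (beta_i R r x).
Proof.
move=> Hv vx_neq0; rewrite /beta_i; split.
  by move=> a u w Hu Hw; rewrite !asboolT //; exact: HX_lin.
split; first by move=> u w Hu Hw; rewrite !asboolT //; exact: HXM.
by split; [exists v; rewrite asboolT | move=> u Hu; rewrite asboolF].
Qed.

Variable phi : Funct R X.
Hypothesis phi_char : Spec R r phi.

(* The traces on [X] of the pointwise neighbourhoods of [phi]. *)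
Definition evaluation_filter : set_system X :=
  filter_from
    [set p : seq (X -> C) * C | (forall u, u \in p.1 -> HX u) /\ 0 < p.2]
    (fun p => [set x | forall u, u \in p.1 -> `|u x - phi u| < p.2]).

Lemma evaluation_filter_proper : ProperFilter evaluation_filter.
Proof.
apply: filter_from_proper; last first.
  move=> [s e] [Hs e_gt0].
  by have [x sx] := character_approx phi_char Hs e_gt0; exists x.
apply: filter_from_filter; first by exists ([::], 1).
move=> [s1 e1] [s2 e2] [Hs1 e1_gt0] [Hs2 e2_gt0] /=.
have lt_min z : (z < Num.min e1 e2) = (z < e1) && (z < e2).
  exact/comparable_lt_min/real_comparable/gtr0_real/e2_gt0/gtr0_real.
exists (s1 ++ s2, Num.min e1 e2) => [|x /= s12x].
  by split; [move=> u; rewrite mem_cat => /orP[/Hs1|/Hs2] | rewrite lt_min e1_gt0].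
by split=> u su; move: (s12x u); rewrite mem_cat su ?orbT lt_min => /(_ isT)/andP[].
Qed.

Lemma beta_i_cvg : beta_i R r @ evaluation_filter --> phi.
Proof.
have FF := evaluation_filter_proper.
apply/Funct_cvgP => t.
change ((fun x => beta_i R r x t) @ evaluation_filter --> phi t).
rewrite /beta_i; have [Ht|Ht] := pselect (HX t); last first.
  under eq_fun do rewrite asboolF //.
  by rewrite (character_out phi_char Ht); exact: cvg_cst.
under eq_fun do rewrite asboolT //.
apply/(@cvgrPdist_lt _ _ _ _ FF) => e e_gt0.
exists ([:: t], e); first by split=> // u; rewrite inE => /eqP ->.
by move=> x /= tx; rewrite distrC tx ?mem_head.
Qed.

Lemma evaluation_filter_Spec : evaluation_filter [set x | Spec R r (beta_i R r x)].
Proof.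
have [v Hv phi_v] := character_one phi_char.
exists ([:: v], 1); first by split=> // u; rewrite inE => /eqP ->.
move=> x /= vx; apply: (beta_i_Spec Hv).
apply: contraTneq (vx v (mem_head _ _)) => ->.
by rewrite phi_v sub0r normrN normr1 ltxx.
Qed.

Lemma beta_i_cvg_within :
  beta_i R r @ evaluation_filter --> within (Spec R r) (nbhs phi).
Proof.
have FF := evaluation_filter_proper.
exact: cvg_within_preimage beta_i_cvg evaluation_filter_Spec.
Qed.

End EvaluationFilter.
Arguments evaluation_filter {R X B} r phi.

Lemma Spec_continuous_unique {R : realType} {X B Y : topologicalType}
    {r : X -> B} {g1 g2 : Funct R X -> Y} :
  hausdorff_space Y -> {within Spec R r, continuous g1} ->
  {within Spec R r, continuous g2} ->
  (forall x, g1 (beta_i R r x) = g2 (beta_i R r x)) ->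
  forall phi, Spec R r phi -> g1 phi = g2 phi.
Proof.
move=> hsY cg1 cg2 g12 phi phi_char.
have FF := evaluation_filter_proper phi phi_char.
have lim (g : Funct R X -> Y) : {within Spec R r, continuous g} ->
    (g \o beta_i R r) @ evaluation_filter r phi --> g phi.
  move=> /subspace_continuousP /(_ phi phi_char) cg.
  by apply: cvg_comp cg; exact: beta_i_cvg_within.
have g12E : g1 \o beta_i R r = g2 \o beta_i R r by apply/funext.
by apply: (cvg_unique hsY (lim _ cg1)); rewrite g12E; exact: lim.
Qed.

Section BetaMap.
Context {R : realType} {X1 X2 B1 B2 : topologicalType}.
Variables (f : X1 -> X2) (r1 : X1 -> B1) (r2 : X2 -> B2).

Definition beta_map (phi : Funct R X1) : Funct R X2 :=
  fun u => if `[< HX R r2 u >] then phi (u \o f) else 0.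

Lemma beta_map_continuous : continuous beta_map.
Proof.
move=> phi.
apply/(@Funct_cvgP _ _ (beta_map @ nbhs phi) _ (fmap_filter _ _)) => u.
change ((fun psi => beta_map psi u) @ phi --> beta_map phi u).
rewrite /beta_map; case: asboolP => _.
  exact: (Funct_cvgP _ _ (nbhs_filter phi)).1 cvg_id (u \o f).
exact: (@cvg_cst (Cpx R) 0 (Funct R X1) (nbhs phi) (nbhs_filter phi)).
Qed.

Hypothesis HX_comp_f : forall u, HX R r2 u -> HX R r1 (u \o f).

Lemma beta_map_beta_i x : beta_map (beta_i R r1 x) = beta_i R r2 (f x).
Proof.
apply/funext => u; rewrite /beta_map /beta_i; case: asboolP => // Hu.
by rewrite asboolT //; exact: HX_comp_f.
Qed.

Section Character.
Variable phi : Funct R X1.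
Hypothesis phi_char : Spec R r1 phi.

Lemma beta_map_lin a u v : HX R r2 u -> HX R r2 v ->
  beta_map phi (fun x => a * u x + v x) = a * beta_map phi u + beta_map phi v.
Proof.
move=> Hu Hv; rewrite /beta_map !asboolT //; last exact: HX_lin.
by have := character_lin phi_char a (HX_comp_f _ Hu) (HX_comp_f _ Hv).
Qed.

Lemma beta_mapM u v : HX R r2 u -> HX R r2 v ->
  beta_map phi (fun x => u x * v x) = beta_map phi u * beta_map phi v.
Proof.
move=> Hu Hv; rewrite /beta_map !asboolT //; last exact: HXM.
by have := characterM phi_char (HX_comp_f _ Hu) (HX_comp_f _ Hv).
Qed.

End Character.

Lemma beta_map_Spec {f0 : B1 -> B2} {br1 : Funct R X1 -> B1} :
  continuous r2 -> continuous f0 -> r2 \o f = f0 \o r1 ->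
  locally_compact [set: B2] -> hausdorff_space B2 -> is_beta_r R r1 br1 ->
  forall phi, Spec R r1 phi -> Spec R r2 (beta_map phi).
Proof.
move=> cr2 cf0 comm lcB2 hsB2 [cbr1 br1_i] phi phi_char.
split; first exact: beta_map_lin.
split; first exact: beta_mapM.
split; last by move=> u Hu; rewrite /beta_map asboolF.
have [h [C0h h_neq0 h_le1]] := @C0_bump R _ lcB2 hsB2 (f0 (br1 phi)).
have [ch _] := C0h; pose u := fun x => h (r2 x).
have Hu : HX R r2 u := HX_C0 cr2 C0h h_le1.
exists u; split=> //; rewrite /beta_map asboolT //.
suff -> : phi (u \o f) = h (f0 (br1 phi)) by [].
have hsC : hausdorff_space (Cpx R) := @norm_hausdorff _ _.
apply: (Spec_continuous_unique hsC (r := r1) (g1 := proj (u \o f))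
  (g2 := h \o f0 \o br1)) => //.
- apply: continuous_subspaceT => psi.
  exact: (@proj_continuous _ (fun=> Cpx R) (u \o f) psi).
- apply: within_continuous_comp cbr1 => b _.
  exact: continuous_comp (cf0 b) (ch _).
- move=> x; rewrite /= br1_i /proj /beta_i asboolT; last exact: HX_comp_f.
  by have /= <- := congr1 (fun g => g x) comm.
Qed.

End BetaMap.
Arguments beta_map_beta_i {R X1 X2 B1 B2 f r1 r2}.
Arguments beta_map_Spec {R X1 X2 B1 B2 f r1 r2} HX_comp_f {f0 br1}.

Theorem lemma4p13 (R : realType) (X1 X2 B1 B2 : topologicalType)
    (f : X1 -> X2) (r1 : X1 -> B1) (r2 : X2 -> B2) (f0 : B1 -> B2) :
  continuous f -> continuous r1 -> continuous r2 -> continuous f0 ->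
  r2 \o f = f0 \o r1 ->
  locally_compact [set: B1] -> hausdorff_space B1 ->
  locally_compact [set: B2] -> hausdorff_space B2 ->
  proper_map f0 ->
  forall (br1 : Funct R X1 -> B1) (br2 : Funct R X2 -> B2),
    is_beta_r R r1 br1 -> is_beta_r R r2 br2 ->
  exists ft : Funct R X1 -> Funct R X2,
    ({within Spec R r1, continuous ft} /\
     (forall phi, Spec R r1 phi -> Spec R r2 (ft phi)) /\
     (forall x, ft (beta_i R r1 x) = beta_i R r2 (f x)) /\
     (forall phi, Spec R r1 phi -> br2 (ft phi) = f0 (br1 phi))) /\
    (forall ft' : Funct R X1 -> Funct R X2,
       {within Spec R r1, continuous ft'} ->
       (forall phi, Spec R r1 phi -> Spec R r2 (ft' phi)) ->
       (forall x, ft' (beta_i R r1 x) = beta_i R r2 (f x)) ->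
       (forall phi, Spec R r1 phi -> br2 (ft' phi) = f0 (br1 phi)) ->
       forall phi, Spec R r1 phi -> ft' phi = ft phi).
Proof.
move=> cf _ cr2 cf0 comm _ _ lcB2 hsB2 pf0 br1 br2 br1P [cbr2 br2_i].
have HX_comp_f := HX_comp (R := R) cf cf0 pf0 comm.
have ft_Spec := beta_map_Spec HX_comp_f cr2 cf0 comm lcB2 hsB2 br1P.
have ft_cont : {within Spec R r1, continuous beta_map f r2}.
  by apply: continuous_subspaceT; exact: beta_map_continuous.
exists (beta_map f r2); split.
  split=> //; split=> //; split; first exact: (beta_map_beta_i HX_comp_f).
  apply: (Spec_continuous_unique (g1 := br2 \o beta_map f r2)
    (g2 := f0 \o br1)) => //.
  - exact: subspace_continuous_comp ft_cont ft_Spec cbr2.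
  - by apply: within_continuous_comp br1P.1 => b _; exact: cf0.
  - move=> x; rewrite /= (beta_map_beta_i HX_comp_f) br2_i br1P.2.
    by have /= -> := congr1 (fun g => g x) comm.
move=> ft' cft' _ ft'_i _.
apply: (Spec_continuous_unique Funct_hausdorff cft' ft_cont) => x.
by rewrite ft'_i (beta_map_beta_i HX_comp_f).
Qed.
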